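(* Consider the constrained imperfect SIR model described in the context. Along any barrier integral curve $(S,I)$ of the MRPI set, with nonzero absolutely continuous adjoint $\lambda=(\lambda_1,\lambda_2)^T$ satisfying $\dot\lambda=\begin{pmatrix}\hat\beta(I)I & -\hat\beta(I)I\\ \alpha(I)S & -\alpha(I)S+\gamma\end{pmatrix}\lambda$, $\lambda(\bar t)=(0,1)^T$, and input $\bar\gamma(t)=\gamma_{\min}$ if $\lambda_2(t)>0$, $\gamma_{\max}$ if $\lambda_2(t)<0$ (arbitrary if $=0$), and such that its endpoint $z=(z_1,z_2)=(S(\bar t),I(\bar t))$ satisfies $z_1\neq0$ and the parameters satisfy $2\beta_{\min}>\beta_{\max}$, the input $\bar\gamma$ only switches at isolated points in time (i.e. $\lambda_2$ does not vanish identically on any nonempty open time interval).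
   Context: Imperfect SIR model: fix $0<\beta_{\min}\le\beta_{\max}$, $0<\gamma_{\min}\le\gamma_{\max}$, $I_{\max}\in(0,1]$, and the pre-designed feedback $\hat\beta(I)=\frac{\beta_{\min}-\beta_{\max}}{I_{\max}}I+\beta_{\max}$. State $x=(S,I)\in\mathbb{R}^2$; the unknown parameter is a Lebesgue measurable disturbance $\gamma:[t_0,\infty[\to[\gamma_{\min},\gamma_{\max}]$; dynamics $\dot S=-\hat\beta(I)SI$, $\dot I=\hat\beta(I)SI-\gamma I$, written $\dot x=f(x,\gamma)$, with constraint $g(x)=I-I_{\max}\le0$. Here $\alpha(I)=2\frac{\beta_{\min}-\beta_{\max}}{I_{\max}}I+\beta_{\max}$, and the displayed adjoint is $\dot\lambda=-(\partial f/\partial x)^T\lambda$; the rule for $\bar\gamma$ maximizes the Hamiltonian $\lambda^Tf$ over $\gamma$. A barrier integral curve reaches $\{I=I_{\max}\}$ tangentially at time $\bar t$ with these adjoint and input conditions, and lies in $\{0\le I\le I_{\max}\}$. *)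

From HB Require Import structures.
From mathcomp Require Import all_boot all_order all_algebra.
From mathcomp Require Import all_classical all_reals all_analysis.
Set Implicit Arguments. Unset Strict Implicit. Unset Printing Implicit Defensive.
Import Order.TTheory GRing.Theory Num.Theory.
Import numFieldNormedType.Exports.
Local Open Scope classical_set_scope.
Local Open Scope ring_scope.

Definition betahat (R : realType) (bmin bmax Imax I : R) : R :=
  (bmin - bmax) / Imax * I + bmax.

(* alpha(I) = 2 (bmin - bmax)/Imax * I + bmax  ( = d/dI (betahat(I) I) ) *)
Definition alphaI (R : realType) (bmin bmax Imax I : R) : R :=
  2 * (bmin - bmax) / Imax * I + bmax.

Definition abs_cont_on (R : realType) (a b : R) (f : R -> R) : Prop :=
  forall e : R, 0 < e -> exists2 d : R, 0 < d &
    forall (n : nat) (u v : nat -> R),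
      (forall k, (k < n)%N -> a <= u k /\ u k <= v k /\ v k <= b) ->
      (forall k, (k.+1 < n)%N -> v k <= u k.+1) ->
      \sum_(k < n) (v k - u k) < d ->
      \sum_(k < n) `|f (v k) - f (u k)| < e.

Definition ae_deriv_on (R : realType) (a b : R) (f g : R -> R) : Prop :=
  {ae (@lebesgue_measure R), forall t : R,
     a <= t <= b -> derivable f t 1 /\ 'D_1 f t = g t}.

(* If l2 vanished on ]a, b[, then at a point c of that interval where the adjoint
   equation holds, l2 c = l2' c = 0 reduces the equation to alpha(I c) S c l1 c = 0.
   The hypothesis 2 bmin > bmax makes alpha positive, and S c <> 0 because S solves
   the linear equation S' = -(betahat(I) I) S, so S c = 0 would force S tbar = 0.
   Hence l1 c = 0.  The adjoint system is linear with locally bounded coefficients,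
   so the same uniqueness argument makes (l1, l2) vanish on [c, tbar], contradicting
   l2 tbar = 1.  Uniqueness for absolutely continuous solutions is a Gronwall-type
   argument resting on the mean-value inequality |f v - f u| <= L (v - u) for an
   absolutely continuous f with |f'| <= L almost everywhere. *)

From HB Require Import structures.
From mathcomp Require Import all_boot all_order all_algebra.
From mathcomp Require Import all_classical all_reals all_analysis.
From mathcomp Require Import ring lra.
Import Order.TTheory GRing.Theory Num.Theory.
Import numFieldNormedType.Exports.
Local Open Scope classical_set_scope.
Local Open Scope ring_scope.

(* The generic [Filter (almost_everywhere _)] hint does not fire for Lebesgue
   measure. *)
#[local] Instance lebesgue_ae_filter (R : realType) :
  Filter (almost_everywhere (@lebesgue_measure R)) := ae_filter_ringOfSetsType _.

Lemma real_induction {R : realType} (P : R -> Prop) (u v : R) : u <= v -> P u ->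
  (forall s, u < s <= v -> (forall z, u <= z < s -> P z) -> P s) ->
  (forall s, u <= s < v -> (forall z, u <= z <= s -> P z) ->
     exists2 h, 0 < h & forall z, s < z < s + h -> P z) ->
  forall z, u <= z <= v -> P z.
Proof.
move=> uv Pu closed open.
pose A := [set y | u <= y <= v /\ forall z, u <= z <= y -> P z].
have Au : A u.
  by split=> [|z /andP[uz zu]]; rewrite ?lexx ?uv // (@le_anti _ _ z u) ?uz ?zu.
have supA : has_sup A by split; [exists u | exists v => y [/andP[_ ->]]].
set s := sup A.
have ub_s y : A y -> y <= s by exact: sup_upper_bound.
have us : u <= s := ub_s u Au.
have sv : s <= v by apply: ge_sup; [exists u | move=> y [/andP[_ ->]]].
have P_below z : u <= z < s -> P z.
  move=> /andP[uz zs]; have sz0 : 0 < s - z by rewrite subr_gt0.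
  have [y [_ Py]] := sup_adherent sz0 supA; rewrite -/s => zy.
  by apply: Py; rewrite uz /=; lra.
have P_upto z : u <= z <= s -> P z.
  move=> /andP[uz]; rewrite le_eqVlt => /orP[/eqP->|zs]; last by apply: P_below; rewrite uz.
  move: us; rewrite le_eqVlt => /orP[/eqP<-//|us].
  by apply: closed P_below; rewrite us sv.
have sv' : s = v.
  apply/eqP; rewrite eq_le sv leNgt; apply/negP => sv'.
  have [h h0 Ph] := open s (introT andP (conj us sv')) P_upto.
  pose y := Num.min (s + h / 2) v.
  have sy : s < y by rewrite lt_min sv' andbT ltrDl divr_gt0.
  have yh : y <= s + h / 2 by rewrite ge_min lexx.
  have Ay : A y.
    split; first by rewrite ge_min lexx orbT (le_trans us (ltW sy)).
    move=> z /andP[uz zy]; have [zs|sz] := leP z s; first by apply: P_upto; rewrite uz.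
    apply: Ph; rewrite sz /=; lra.
  by have := ub_s y Ay; rewrite leNgt sy.
by rewrite -sv'.
Qed.

Section abs_cont.
Context {R : realType}.
Implicit Types (a b c d : R) (f : R -> R).

Lemma abs_cont_on_sub {a b c d f} :
  abs_cont_on a b f -> a <= c -> d <= b -> abs_cont_on c d f.
Proof.
move=> acf ac db e e0; have [del del0 Hdel] := acf e e0.
exists del => // n u v uv_in ordered small; apply: Hdel => // k kn.
have [cu [uv vd]] := uv_in k kn.
by split; [exact: le_trans cu | split; last exact: le_trans db].
Qed.

Lemma abs_cont_on_cst a b (k : R) : abs_cont_on a b (fun=> k).
Proof.
move=> e e0; exists 1 => // n u v _ _ _.
by rewrite big1 // => i _; rewrite subrr normr0.
Qed.

Lemma abs_cont_on_unif_cont {a b f} {e : R} : abs_cont_on a b f -> 0 < e ->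
  exists2 del, 0 < del & forall s t,
    a <= s <= b -> a <= t <= b -> `|t - s| < del -> `|f t - f s| < e.
Proof.
move=> acf e0; have [del del0 Hdel] := acf e e0; exists del => // s t.
wlog st : s t / s <= t.
  move=> W sI tI ts; have [st|ts'] := leP s t; first exact: W.
  by rewrite distrC (W t s) 1?distrC // ltW.
move=> /andP[as_ _] /andP[_ tb] ts.
have := Hdel 1%N (fun=> s) (fun=> t); rewrite !big_ord1; apply => //.
by move: ts; rewrite ger0_norm // subr_ge0.
Qed.

Lemma abs_cont_on_eq0_left {a b f s} : abs_cont_on a b f -> a < s <= b ->
  (forall z, a <= z < s -> f z = 0) -> f s = 0.
Proof.
move=> acf /andP[as_ sb] f0; apply/eqP; rewrite -normr_le0.
apply/ler_addgt0Pr => e e0; rewrite add0r.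
have [del del0 Hdel] := abs_cont_on_unif_cont acf e0.
pose z := Num.max a (s - del / 2).
have az : a <= z by rewrite le_max lexx.
have zs : z < s by rewrite gt_max as_ /= ltrBlDr ltrDl divr_gt0.
have fz : f z = 0 by apply: f0; rewrite az zs.
have dist_sz : `|s - z| < del.
  have : s - del / 2 <= z by rewrite le_max lexx orbT.
  by rewrite gtr0_norm ?subr_gt0 //; lra.
have zI : a <= z <= b by rewrite az (le_trans (ltW zs)).
have sI : a <= s <= b by rewrite (ltW as_).
by have := Hdel z s zI sI dist_sz; rewrite fz subr0 => /ltW.
Qed.

End abs_cont.

Lemma derivable_lipschitz_at {R : realType} {f : R -> R} {t L e : R} :
  derivable f t 1 -> `|'D_1 f t| <= L -> 0 < e ->
  exists2 eta, 0 < eta & forall y, `|y - t| < eta ->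
    `|f y - f t| <= (L + e) * `|y - t|.
Proof.
move=> df DL e0.
have Df : (fun h => h^-1 *: ((f \o shift t) (h *: 1) - f t)) @ 0^' --> 'D_1 f t := df.
have [eta /= eta0 Heta] := @cvgr_dist_lt _ _ _ (0^') _ _ _ Df _ e0.
exists eta => // y yt; have [->|yt0] := eqVneq y t.
  by rewrite !subrr normr0 mulr0.
have := Heta (y - t); rewrite /ball /= sub0r normrN subr_eq0 => /(_ yt yt0).
rewrite -[(y - t)%:A]/((y - t) * 1) mulr1 subrK.
set q := (y - t)^-1 *: (f y - f t) => Dq.
have -> : f y - f t = (y - t) * q by rewrite /q -[_ *: _]/(_ * _); field; rewrite subr_eq0.
rewrite normrM mulrC ler_wpM2r //.
have := ler_normD ('D_1 f t) (q - 'D_1 f t); rewrite addrC subrK distrC; lra.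
Qed.

Section abs_cont_increment.
Context {R : realType}.
Local Notation mu := (@lebesgue_measure R).

Section packed_increment.
Variables (U : set R) (f : R -> R) (u v K : R).
Hypotheses (oU : open U) (K0 : 0 <= K).
Hypothesis lipschitz_off_U : forall s, u <= s <= v -> ~ U s ->
  exists2 r, 0 < r & forall y, `|y - s| < r -> `|f y - f s| <= K * `|y - s|.

(* Invariant of the creeping argument: the increment of [f] on [u, x] is
   [K]-Lipschitz up to the variation of [f] over finitely many non-overlapping
   intervals of total length at most the measure of [U] left of [x].  Taking for
   [U] an open set of small measure around the points where [f] is not
   [K]-Lipschitz, absolute continuity makes that variation small. *)
Definition packed_increment_bound (x : R) : Prop :=
  exists n (a b : nat -> R),
   [/\ (forall k, (k < n)%N -> u <= a k /\ a k <= b k /\ b k <= x),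
       (forall k, (k.+1 < n)%N -> b k <= a k.+1),
       ((\sum_(k < n) (b k - a k))%:E <= mu (U `&` `]-oo, x[))%E &
       `|f x - f u| <= K * (x - u) + \sum_(k < n) `|f (b k) - f (a k)|].

Let mU : measurable U := measurable_realfun.open_measurable oU.

Let mUI x : measurable (U `&` `]-oo, x[) := measurableI _ _ mU (measurable_itv _).

Lemma packed_increment_bound_start : packed_increment_bound u.
Proof.
exists 0%N, (fun=> 0), (fun=> 0); split => //.
- by rewrite big_ord0 measure_ge0.
- by rewrite !subrr normr0 mulr0 big_ord0 addr0.
Qed.

Lemma packed_increment_bound_lipschitz (y z : R) : y <= z ->
  `|f z - f y| <= K * (z - y) ->
  packed_increment_bound y -> packed_increment_bound z.
Proof.
move=> yz fyz [n [a [b [abI ord sum_le incr]]]].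
exists n, a, b; split => //.
- move=> k /abI[? [? ?]]; do 2 split => //; exact: le_trans yz.
- apply: le_trans sum_le _; apply: le_measure; rewrite ?inE; [exact: mUI..|].
  move=> w [Uw] wy; split => //.
  by move: wy; rewrite /= !in_itv /= => wy; exact: lt_le_trans yz.
- have := ler_normD (f z - f y) (f y - f u); rewrite addrA subrK; lra.
Qed.

Lemma packed_increment_bound_open (y z : R) : u <= y <= z ->
  `[y, z[ `<=` U -> packed_increment_bound y -> packed_increment_bound z.
Proof.
move=> /andP[uy yz] yzU [n [a [b [abI ord sum_le incr]]]].
pose a' k := if k == n then y else a k.
pose b' k := if k == n then z else b k.
have sum_ext (F : R -> R -> R) :
    \sum_(k < n.+1) F (b' k) (a' k) = \sum_(k < n) F (b k) (a k) + F z y.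
  rewrite big_ord_recr /= /a' /b' eqxx; congr (_ + _).
  by apply: eq_bigr => k _; rewrite (ltn_eqF (ltn_ord k)).
exists n.+1, a', b'; split.
- move=> k; rewrite ltnS leq_eqVlt => /orP[/eqP->|kn]; first by rewrite /a' /b' eqxx.
  rewrite /a' /b' (ltn_eqF kn); have [? [? ?]] := abI k kn.
  by do 2 split => //; exact: le_trans yz.
- move=> k; rewrite ltnS => kn; rewrite /a' /b' (ltn_eqF kn).
  case: ifP => [_|/negbT kn1]; first by have [_ []] := abI k kn.
  by apply: ord; rewrite ltn_neqAle kn1 kn.
- have yz_mu : (z - y)%:E = mu `[y, z[.
    rewrite lebesgue_measure_itv /= lte_fin; case: ltP => [_|zy]; first by rewrite -EFinD.
    by rewrite (@le_anti _ _ z y) ?subrr // zy yz.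
  rewrite (sum_ext (fun p q => p - q)) EFinD yz_mu.
  apply: le_trans (leeD2r _ sum_le) _; rewrite -measureU //; last 2 first.
  + exact: mUI.
  + apply/seteqP; split => w //= [[_]]; rewrite !in_itv /= => wy /andP[yw _].
    by move: (lt_le_trans wy yw); rewrite ltxx.
  apply: le_measure; rewrite ?inE; [apply: measurableU; [exact: mUI | exact: measurable_itv] | exact: mUI |].
  move=> w [[Uw]|]; rewrite /= !in_itv /=; first by move=> wy; split => //; exact: lt_le_trans yz.
  by move=> /andP[yw wz]; split; [apply: yzU; rewrite /= in_itv /= yw wz | ].
- rewrite (sum_ext (fun p q => `|f p - f q|)).
  have := ler_normD (f z - f y) (f y - f u); rewrite addrA subrK.
  have : 0 <= K * (z - y) by rewrite mulr_ge0 // subr_ge0.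
  move: incr; set A := `|f y - f u|; set B := `|f z - f y|; set C := \sum_(k < n) _.
  lra.
Qed.

Lemma packed_increment_bound_near s : u <= s <= v -> exists2 r, 0 < r &
  forall y z, u <= y <= s -> s <= z -> z - y < r ->
    packed_increment_bound y -> packed_increment_bound z.
Proof.
move=> sI; case: (pselect (U s)) => Us.
- have /nbhs_ballP[r /= r0 ballU] : nbhs s U by apply: open_nbhs_nbhs.
  exists r => // y z /andP[uy ys] sz zy; apply: packed_increment_bound_open.
    by rewrite uy (le_trans ys sz).
  move=> w /=; rewrite in_itv /= => /andP[yw wz]; apply: ballU.
  rewrite /ball /= ltr_distlC; apply/andP; split; lra.
- have [r r0 Hr] := lipschitz_off_U s sI Us.
  exists r => // y z /andP[uy ys] sz zy; apply: packed_increment_bound_lipschitz.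
    exact: le_trans sz.
  have := Hr z; rewrite ger0_norm ?subr_ge0 // => /(_ ltac:(lra)) fz.
  have := Hr y; rewrite ler0_norm ?subr_le0 // distrC => /(_ ltac:(lra)) fy.
  have := ler_normD (f z - f s) (f s - f y); rewrite addrA subrK; lra.
Qed.

Lemma packed_increment_bound_right_end : u <= v -> packed_increment_bound v.
Proof.
move=> uv; apply: (real_induction _ u v uv packed_increment_bound_start).
- move=> s /andP[us sv] P_below.
  have [r r0 Hr] := packed_increment_bound_near s (ltac:(by rewrite ltW)).
  pose y := Num.max u (s - r / 2).
  have ys : y < s by rewrite gt_max us /= ltrBlDr ltrDl divr_gt0.
  have uy : u <= y by rewrite le_max lexx.
  have sry : s - r / 2 <= y by rewrite le_max lexx orbT.
  apply: (Hr y) => //; first by rewrite uy ltW.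
  + lra.
  + by apply: P_below; rewrite uy.
- move=> s /andP[us sv] P_upto.
  have [r r0 Hr] := packed_increment_bound_near s (ltac:(by rewrite us ltW)).
  exists r => // z /andP[sz zr]; apply: (Hr s) => //.
  + by rewrite us lexx.
  + exact: ltW.
  + lra.
  + by apply: P_upto; rewrite us lexx.
- by rewrite uv lexx.
Qed.

End packed_increment.

Lemma abs_cont_increment_le_eps {u v L e : R} {f : R -> R} :
  u <= v -> 0 <= L -> 0 < e -> abs_cont_on u v f ->
  {ae mu, forall t, u <= t <= v -> derivable f t 1 /\ `|'D_1 f t| <= L} ->
  `|f v - f u| <= (L + e) * (v - u) + e.
Proof.
move=> uv L0 e0 acf [N [mN N0 ae_sub]].
have [d d0 Hd] := acf e e0.
have Nfin : (mu N < +oo)%E by rewrite N0 ltry.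
have [U [oU NU UNd]] := lebesgue_regularity_outer mN Nfin d0.
have mU : measurable U := measurable_realfun.open_measurable oU.
have muU : (mu U < d%:E)%E.
  rewrite -(setDUK NU); apply: le_lt_trans (measureU2 _ _ _) _ => //.
  - exact: measurableD.
  - by rewrite [X in (X + _)%E](_ : _ = 0%E) ?add0e.
have K0 : 0 <= L + e by rewrite addr_ge0 // ltW.
have lip s : u <= s <= v -> ~ U s -> exists2 r, 0 < r &
    forall y, `|y - s| < r -> `|f y - f s| <= (L + e) * `|y - s|.
  move=> sI Us; have [Ds DsL] : derivable f s 1 /\ `|'D_1 f s| <= L.
    by apply: contrapT => H; apply/Us/NU/ae_sub => /(_ sI).
  exact: derivable_lipschitz_at Ds DsL e0.
have [n [a [b [abI ord sum_le incr]]]] :=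
  packed_increment_bound_right_end U f u v (L + e) oU K0 lip uv.
have sum_lt_d : \sum_(k < n) (b k - a k) < d.
  rewrite -lte_fin; apply: le_lt_trans sum_le (le_lt_trans _ muU).
  by apply: le_measure; rewrite ?inE //; apply: measurableI => //; exact: measurable_itv.
have := Hd n a b abI ord sum_lt_d; move: incr.
set V := \sum_(k < n) _; lra.
Qed.

Lemma abs_cont_increment_le {u v L : R} {f : R -> R} :
  u <= v -> 0 <= L -> abs_cont_on u v f ->
  {ae mu, forall t, u <= t <= v -> derivable f t 1 /\ `|'D_1 f t| <= L} ->
  `|f v - f u| <= L * (v - u).
Proof.
move=> uv L0 acf df; apply/ler_addgt0Pr => e e0.
have c0 : 0 < v - u + 1 by rewrite ltr_wpDl // subr_ge0.
have e'0 : 0 < e / (v - u + 1) by rewrite divr_gt0.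
have := abs_cont_increment_le_eps uv L0 e'0 acf df.
suff -> : (L + e / (v - u + 1)) * (v - u) + e / (v - u + 1) = L * (v - u) + e by [].
by field; rewrite lt0r_neq0.
Qed.

End abs_cont_increment.

Section gronwall.
Context {R : realType}.
Local Notation mu := (@lebesgue_measure R).
Context {c d : R} {x1 x2 : R -> R}.
Hypotheses (cd : c <= d) (ac1 : abs_cont_on c d x1) (ac2 : abs_cont_on c d x2).
Hypothesis locally_linear : forall s, c <= s <= d ->
  exists2 K, 0 <= K & exists2 eta, 0 < eta &
  {ae mu, forall t, c <= t <= d -> `|t - s| < eta ->
    [/\ derivable x1 t 1, derivable x2 t 1 &
        `|'D_1 x1 t| + `|'D_1 x2 t| <= K * (`|x1 t| + `|x2 t|)]}.

Lemma norm_sum_le_from_zero s t L : c <= s <= t -> t <= d -> 0 <= L ->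
  x1 s = 0 -> x2 s = 0 ->
  {ae mu, forall t', s <= t' <= t -> [/\ derivable x1 t' 1, derivable x2 t' 1 &
     `|'D_1 x1 t'| + `|'D_1 x2 t'| <= L]} ->
  `|x1 t| + `|x2 t| <= 2 * L * (t - s).
Proof.
move=> /andP[cs st] td L0 x1s x2s dx.
have x1_le : `|x1 t| <= L * (t - s).
  have := abs_cont_increment_le st L0 (abs_cont_on_sub ac1 cs td).
  rewrite x1s subr0; apply; apply: filterS dx => t' + t'I => /(_ t'I) [D1 _ bound].
  by split => //; apply: le_trans bound; rewrite lerDl.
have x2_le : `|x2 t| <= L * (t - s).
  have := abs_cont_increment_le st L0 (abs_cont_on_sub ac2 cs td).
  rewrite x2s subr0; apply; apply: filterS dx => t' + t'I => /(_ t'I) [_ D2 bound].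
  by split => //; apply: le_trans bound; rewrite lerDr.
lra.
Qed.

Lemma gronwall_zero2_right s : c <= s < d -> x1 s = 0 -> x2 s = 0 ->
  exists2 h, 0 < h & forall t, s <= t <= s + h -> x1 t = 0 /\ x2 t = 0.
Proof.
move=> /andP[cs sd] x1s x2s.
have sI : c <= s <= d by rewrite cs ltW.
have [K K0 [eta eta0 lin]] := locally_linear s sI.
have [d1 d10 Hd1] := abs_cont_on_unif_cont ac1 ltr01.
have [d2 d20 Hd2] := abs_cont_on_unif_cont ac2 ltr01.
have K4 : 0 < 4 * K + 4 by rewrite ltr_wpDl // mulr_ge0.
(* [h] keeps [x1], [x2] bounded and within [eta] of [s], and [4 K h <= 1] turns the
   a priori bound into [M <= M / 2] for the supremum [M] of [|x1| + |x2|]. *)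
pose h := Num.min (Num.min (eta / 2) (Num.min (d1 / 2) (d2 / 2)))
                  (Num.min (4 * K + 4)^-1 (d - s)).
have h0 : 0 < h by rewrite !lt_min !divr_gt0 //= invr_gt0 K4 subr_gt0.
have [he hd1 hd2 hK hds] : [/\ h <= eta / 2, h <= d1 / 2, h <= d2 / 2,
    h <= (4 * K + 4)^-1 & h <= d - s] by rewrite !ge_min !lexx /= !orbT.
have Kh : 4 * (K * h) <= 1.
  have := ler_wpM2l (ltW K4) hK; rewrite mulfV ?lt0r_neq0 //; lra.
have inI t : s <= t <= s + h -> c <= t <= d.
  by move=> /andP[st tsh]; rewrite (le_trans cs st) /=; lra.
have x_lt1 t : s <= t <= s + h -> `|x1 t| + `|x2 t| < 2.
  move=> tI; have /andP[st tsh] := tI.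
  have ts : `|t - s| < d1 /\ `|t - s| < d2 by rewrite ger0_norm ?subr_ge0 //; lra.
  have := Hd1 s t sI (inI t tI) ts.1; have := Hd2 s t sI (inI t tI) ts.2.
  by rewrite x1s x2s !subr0; lra.
pose Mset := [set `|x1 t| + `|x2 t| | t in [set t | s <= t <= s + h]].
have ssh : s <= s <= s + h by rewrite lexx lerDl ltW.
have Mset_sup : has_sup Mset.
  by split; [exists (`|x1 s| + `|x2 s|), s | exists 2 => _ [t tI <-]; exact/ltW/x_lt1].
set M := sup Mset.
have le_M t : s <= t <= s + h -> `|x1 t| + `|x2 t| <= M.
  by move=> tI; apply: sup_upper_bound => //; exists t.
have M0 : 0 <= M by have := le_M s ssh; rewrite x1s x2s normr0 addr0.
have KM0 : 0 <= K * M by exact: mulr_ge0.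
have x_small t : s <= t <= s + h -> `|x1 t| + `|x2 t| <= 2 * (K * h) * M.
  move=> tI; have /andP[st tsh] := tI; have /andP[_ td] := inI t tI.
  have KMh : K * M * (t - s) <= K * M * h by apply: ler_wpM2l => //; lra.
  apply: le_trans (norm_sum_le_from_zero s t (K * M) _ td KM0 x1s x2s _) _.
  - by rewrite cs st.
  - apply: filterS lin => t' lin_t' /andP[st' t't].
    have t'I : s <= t' <= s + h by rewrite st' (le_trans t't tsh).
    have [D1 D2 bound] := lin_t' (inI t' t'I) (ltac:(rewrite ger0_norm ?subr_ge0 //; lra)).
    by split => //; apply: le_trans bound _; apply: ler_wpM2l => //; exact: le_M.
  - lra.
have M_half : M <= M / 2.
  apply: ge_sup; first by exists (`|x1 s| + `|x2 s|), s.
  move=> _ [t tI <-]; apply: le_trans (x_small t tI) _.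
  have := ler_wpM2r M0 Kh; rewrite mul1r.
  have -> : 2 * (K * h) * M = (4 * (K * h) * M) / 2 by field.
  by move=> ?; rewrite ler_pM2r.
have {M_half}M_eq0 : M = 0 by lra.
exists h => // t tI; have := le_M t tI; rewrite M_eq0.
by have := normr_ge0 (x1 t); have := normr_ge0 (x2 t); split; apply/normr0_eq0; lra.
Qed.

Lemma gronwall_zero2 : x1 c = 0 -> x2 c = 0 ->
  forall t, c <= t <= d -> x1 t = 0 /\ x2 t = 0.
Proof.
move=> x1c x2c.
apply: (real_induction (fun t => x1 t = 0 /\ x2 t = 0) c d cd (conj x1c x2c)).
- move=> s sI zero_below.
  by split; apply: (abs_cont_on_eq0_left _ sI) => // z /zero_below[].
- move=> s /andP[cs sd] zero_upto.
  have [x1s x2s] := zero_upto s (ltac:(by rewrite cs lexx)).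
  have [h h0 zero_right] := gronwall_zero2_right s (ltac:(by rewrite cs sd)) x1s x2s.
  by exists h => // z /andP[sz zh]; apply: zero_right; rewrite !ltW.
Qed.

End gronwall.

Lemma gronwall_zero {R : realType} {c d K : R} {x : R -> R} :
  c <= d -> 0 <= K -> abs_cont_on c d x ->
  {ae @lebesgue_measure R, forall t, c <= t <= d ->
     derivable x t 1 /\ `|'D_1 x t| <= K * `|x t|} ->
  x c = 0 -> x d = 0.
Proof.
move=> cd K0 acx dx xc.
have lin s : c <= s <= d -> exists2 K', 0 <= K' & exists2 eta, 0 < eta &
    {ae @lebesgue_measure R, forall t, c <= t <= d -> `|t - s| < eta ->
      [/\ derivable x t 1, derivable (fun=> 0 : R) t 1 &
          `|'D_1 x t| + `|'D_1 (fun=> 0 : R) t| <= K' * (`|x t| + `|0 : R|)]}.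
  move=> _; exists K => //; exists 1; first exact: ltr01.
  apply: filterS dx => t dxt tI _.
  have [Dx bound] := dxt tI.
  by split; [exact: Dx | exact: derivable_cst | rewrite derive_cst normr0 !addr0].
have dI : c <= d <= d by rewrite cd lexx.
by have [] := gronwall_zero2 cd acx (abs_cont_on_cst c d 0) lin xc erefl d dI.
Qed.

Lemma ae_exists_in_itv {R : realType} {a b : R} {P : R -> Prop} : a < b ->
  {ae @lebesgue_measure R, forall t, P t} -> exists2 c, a < c < b & P c.
Proof.
move=> ab [N [mN N0 notPN]]; apply: contrapT => noc.
have itvN : `]a, b[ `<=` N.
  move=> z; rewrite /= in_itv /= => zab; apply: notPN => Pz; apply: noc; by exists z.
have : (@lebesgue_measure R `]a, b[ <= @lebesgue_measure R N)%E.
  by apply: le_measure; rewrite ?inE //; exact: measurable_itv.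
by rewrite N0 lebesgue_measure_itv /= lte_fin ab -EFinD lee_fin subr_le0 leNgt ab.
Qed.

Lemma derive1_eq0_itv {R : realType} {f : R -> R} {a b c : R} : a < c < b ->
  (forall t, a < t < b -> f t = 0) -> 'D_1 f c = 0.
Proof.
move=> /andP[ac cb] f0.
have f_near : \forall t \near c, f t = (fun=> 0 : R) t.
  apply/nbhs_ballP; exists (Num.min (c - a) (b - c)) => /=.
    by rewrite lt_min !subr_gt0 ac cb.
  move=> t; rewrite /ball /= lt_min !ltr_norml => /andP[/andP[? ?] /andP[? ?]].
  by apply: f0; apply/andP; split; lra.
by rewrite (near_eq_derive (1 : R) f_near) derive_cst.
Qed.

Section feedback_bounds.
Context {R : realType} {bmin bmax Imax x : R}.
Hypotheses (Imax_gt0 : 0 < Imax) (x_bound : 0 <= x <= Imax).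
Hypothesis bmin_le_bmax : bmin <= bmax.

Let slope_bound : 0 <= (bmax - bmin) * (x / Imax) <= bmax - bmin.
Proof.
have /andP[x0 xI] := x_bound; have gap0 : 0 <= bmax - bmin by rewrite subr_ge0.
apply/andP; split; first by rewrite mulr_ge0 // divr_ge0 // ltW.
by apply: ler_piMr => //; rewrite ler_pdivrMr // mul1r.
Qed.

Let betahatE : betahat bmin bmax Imax x = bmax - (bmax - bmin) * (x / Imax).
Proof. by rewrite /betahat; ring. Qed.

Let alphaIE : alphaI bmin bmax Imax x = bmax - 2 * ((bmax - bmin) * (x / Imax)).
Proof. by rewrite /alphaI; ring. Qed.

Lemma betahatM_norm_le : 0 <= bmin -> Imax <= 1 ->
  `|betahat bmin bmax Imax x * x| <= bmax.
Proof.
move=> bmin0 Imax1; have /andP[x0 xI] := x_bound.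
have x1 : x <= 1 by exact: le_trans xI Imax1.
have /andP[s0 s1] := slope_bound.
have b0 : 0 <= betahat bmin bmax Imax x by rewrite betahatE; lra.
have b1 : betahat bmin bmax Imax x <= bmax by rewrite betahatE; lra.
by rewrite ger0_norm ?mulr_ge0 // -[leRHS]mulr1 ler_pM.
Qed.

Lemma alphaI_norm_le : 0 <= bmin -> `|alphaI bmin bmax Imax x| <= bmax.
Proof.
move=> bmin0; have /andP[s0 s1] := slope_bound.
by rewrite alphaIE ler_norml; apply/andP; split; lra.
Qed.

Lemma alphaI_gt0 : bmax < 2 * bmin -> 0 < alphaI bmin bmax Imax x.
Proof. by move=> b2; have /andP[_ s1] := slope_bound; rewrite alphaIE; lra. Qed.

End feedback_bounds.

Lemma adjoint_rhs_norm_le {R : realType} (p q s g y1 y2 P B G : R) :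
  `|p| <= P -> `|q| <= P -> `|s| <= B -> `|g| <= G ->
  `|p * y1 - p * y2| + `|q * s * y1 + (- q * s + g) * y2|
    <= (P + P * B + G) * (`|y1| + `|y2|).
Proof.
move=> pP qP sB gG.
have y12 : `|y1 - y2| <= `|y1| + `|y2| by exact: ler_normB.
have qsPB : `|q * s| <= P * B by rewrite normrM ler_pM.
have -> : p * y1 - p * y2 = p * (y1 - y2) by ring.
have -> : q * s * y1 + (- q * s + g) * y2 = q * s * (y1 - y2) + g * y2 by ring.
have := ler_normD (q * s * (y1 - y2)) (g * y2).
rewrite [`|q * s * _|]normrM [`|g * _|]normrM [`|p * _|]normrM.
have := ler_pM (normr_ge0 _) (normr_ge0 _) pP y12.
have := ler_pM (normr_ge0 _) (normr_ge0 _) qsPB y12.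
have y2le : `|y2| <= `|y1| + `|y2| by rewrite lerDr.
have := ler_pM (normr_ge0 _) (normr_ge0 _) gG y2le.
lra.
Qed.

Section sir_adjoint.
Context {R : realType}.
Context {bmin bmax gmax Imax t0 tbar : R} {S I l1 l2 gbar : R -> R}.
Hypotheses (bmin_ge0 : 0 <= bmin) (bmin_le_bmax : bmin <= bmax).
Hypotheses (Imax_gt0 : 0 < Imax) (Imax_le1 : Imax <= 1).
Hypothesis I_bound : forall t, t0 <= t <= tbar -> 0 <= I t <= Imax.
Hypothesis gbar_bound : forall t, t0 <= t <= tbar -> `|gbar t| <= gmax.
Hypotheses (acS : abs_cont_on t0 tbar S) (acl1 : abs_cont_on t0 tbar l1)
  (acl2 : abs_cont_on t0 tbar l2).
Hypothesis dS : ae_deriv_on t0 tbar S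
  (fun t => - betahat bmin bmax Imax (I t) * S t * I t).
Hypothesis dl1 : ae_deriv_on t0 tbar l1
  (fun t => betahat bmin bmax Imax (I t) * I t * l1 t
            - betahat bmin bmax Imax (I t) * I t * l2 t).
Hypothesis dl2 : ae_deriv_on t0 tbar l2
  (fun t => alphaI bmin bmax Imax (I t) * S t * l1 t
            + (- alphaI bmin bmax Imax (I t) * S t + gbar t) * l2 t).

Let bmax_ge0 : 0 <= bmax := le_trans bmin_ge0 bmin_le_bmax.

Lemma S_eq0_forward c : t0 <= c <= tbar -> S c = 0 -> S tbar = 0.
Proof.
move=> /andP[t0c ctbar] Sc.
apply: (gronwall_zero ctbar bmax_ge0 (abs_cont_on_sub acS t0c (lexx _)) _ Sc).
apply: filterS dS => t dSt /andP[ct ttbar].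
have tI : t0 <= t <= tbar by rewrite (le_trans t0c ct).
have [DS ->] := dSt tI; split => //.
have -> : - betahat bmin bmax Imax (I t) * S t * I t
          = - (betahat bmin bmax Imax (I t) * I t * S t) by ring.
rewrite normrN normrM.
apply: ler_wpM2r => //.
exact: betahatM_norm_le Imax_gt0 (I_bound t tI) bmin_le_bmax bmin_ge0 Imax_le1.
Qed.

Lemma adjoint_eq0_forward c : t0 <= c <= tbar -> l1 c = 0 -> l2 c = 0 ->
  l2 tbar = 0.
Proof.
move=> /andP[t0c ctbar] l1c l2c.
have lin s : c <= s <= tbar -> exists2 K, 0 <= K & exists2 eta, 0 < eta &
    {ae @lebesgue_measure R, forall t, c <= t <= tbar -> `|t - s| < eta ->
      [/\ derivable l1 t 1, derivable l2 t 1 &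
          `|'D_1 l1 t| + `|'D_1 l2 t| <= K * (`|l1 t| + `|l2 t|)]}.
  move=> /andP[cs stbar]; have sI : t0 <= s <= tbar by rewrite (le_trans t0c cs).
  have [del del0 S_near] := abs_cont_on_unif_cont acS ltr01.
  have gmax0 : 0 <= gmax := le_trans (normr_ge0 _) (gbar_bound s sI).
  exists (bmax + bmax * (`|S s| + 1) + gmax); first by rewrite !addr_ge0 ?mulr_ge0.
  exists del => //; apply: filterS2 dl1 dl2 => t dl1t dl2t /andP[ct ttbar] ts.
  have tI : t0 <= t <= tbar by rewrite (le_trans t0c ct).
  have [D1 ->] := dl1t tI; have [D2 ->] := dl2t tI; split => //.
  apply: adjoint_rhs_norm_le (gbar_bound t tI).
  - exact: betahatM_norm_le Imax_gt0 (I_bound t tI) bmin_le_bmax bmin_ge0 Imax_le1.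
  - exact: alphaI_norm_le Imax_gt0 (I_bound t tI) bmin_le_bmax bmin_ge0.
  - have := S_near s t sI tI ts.
    have := ler_normD (S s) (S t - S s); rewrite addrC subrK; lra.
have ac_c x : abs_cont_on t0 tbar x -> abs_cont_on c tbar x.
  by move=> acx; exact: abs_cont_on_sub acx t0c (lexx _).
have tbarI : c <= tbar <= tbar by rewrite ctbar lexx.
by have [] := gronwall_zero2 ctbar (ac_c _ acl1) (ac_c _ acl2) lin l1c l2c tbar tbarI.
Qed.

End sir_adjoint.

Theorem proposition7 (R : realType)
  (bmin bmax gmin gmax Imax : R)
  (t0 tbar : R) (S I l1 l2 gbar : R -> R) :
  (* standing assumptions on the parameters *)
  0 < bmin -> bmin <= bmax -> 0 < gmin -> gmin <= gmax ->
  0 < Imax -> Imax <= 1 ->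
  t0 < tbar ->
  (* the input gbar : [t0, +oo[ -> [gmin, gmax] is Lebesgue measurable *)
  measurable_fun `[t0, +oo[ gbar ->
  (forall t, t0 <= t -> gmin <= gbar t <= gmax) ->
  (* (S, I) is an absolutely continuous solution of the SIR dynamics with input gbar *)
  abs_cont_on t0 tbar S -> abs_cont_on t0 tbar I ->
  ae_deriv_on t0 tbar S
    (fun t => - betahat bmin bmax Imax (I t) * S t * I t) ->
  ae_deriv_on t0 tbar I
    (fun t => betahat bmin bmax Imax (I t) * S t * I t - gbar t * I t) ->
  (* the curve lies in { 0 <= I <= Imax } *)
  (forall t, t0 <= t <= tbar -> 0 <= I t <= Imax) ->
  (* it reaches { I = Imax } at time tbar, tangentially:
     max_{gamma in [gmin,gmax]} (dg/dx) f(z, gamma) = 0 *)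
  I tbar = Imax ->
  (forall g, gmin <= g <= gmax ->
     betahat bmin bmax Imax (I tbar) * S tbar * I tbar - g * I tbar <= 0) ->
  (exists2 g, gmin <= g <= gmax &
     betahat bmin bmax Imax (I tbar) * S tbar * I tbar - g * I tbar = 0) ->
  (* nonzero absolutely continuous adjoint satisfying the adjoint equation *)
  abs_cont_on t0 tbar l1 -> abs_cont_on t0 tbar l2 ->
  (exists2 t, t0 <= t <= tbar & (l1 t, l2 t) <> (0, 0)) ->
  ae_deriv_on t0 tbar l1
    (fun t => betahat bmin bmax Imax (I t) * I t * l1 t
              - betahat bmin bmax Imax (I t) * I t * l2 t) ->
  ae_deriv_on t0 tbar l2
    (fun t => alphaI bmin bmax Imax (I t) * S t * l1 t
              + (- alphaI bmin bmax Imax (I t) * S t + gbar t) * l2 t) ->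
  l1 tbar = 0 -> l2 tbar = 1 ->
  (* Hamiltonian-maximizing input rule *)
  (forall t, t0 <= t <= tbar -> 0 < l2 t -> gbar t = gmin) ->
  (forall t, t0 <= t <= tbar -> l2 t < 0 -> gbar t = gmax) ->
  (* extra hypotheses of the proposition *)
  S tbar != 0 ->
  bmax < 2 * bmin ->
  (* conclusion: l2 does not vanish identically on any nonempty open
     subinterval of the time domain, so gbar switches only at isolated times *)
  forall a b, t0 <= a -> a < b -> b <= tbar ->
    ~ (forall t, a < t < b -> l2 t = 0).
Proof.
move=> bmin0 bmin_le_bmax gmin0 gmin_le_gmax Imax0 Imax1 _ _ gbar_range acS _ dS _
  I_bound _ _ _ acl1 acl2 _ dl1 dl2 _ l2tbar _ _ Stbar b2 a b t0a ab btbar l2_eq0.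
have gbar_bound t : t0 <= t <= tbar -> `|gbar t| <= gmax.
  by move=> /andP[t0t _]; have /andP[g1 g2] := gbar_range t t0t; rewrite ger0_norm //; lra.
have [c /andP[ac cb] dl2c] := ae_exists_in_itv ab dl2.
have cI : t0 <= c <= tbar by rewrite (le_trans t0a (ltW ac)) (le_trans (ltW cb) btbar).
have l2c : l2 c = 0 by apply: l2_eq0; rewrite ac cb.
have Sc : S c != 0.
  apply: contra_neq Stbar.
  exact: S_eq0_forward (ltW bmin0) bmin_le_bmax Imax0 Imax1 I_bound acS dS c cI.
have l1c : l1 c = 0.
  have Dl2c : 'D_1 l2 c = 0 by apply: derive1_eq0_itv l2_eq0; rewrite ac cb.
  have alpha_pos := alphaI_gt0 Imax0 (I_bound c cI) bmin_le_bmax b2.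
  have [_] := dl2c cI; rewrite Dl2c l2c mulr0 addr0 => /esym/eqP.
  by rewrite !mulf_eq0 (gt_eqF alpha_pos) (negPf Sc) /= => /eqP.
have := adjoint_eq0_forward (ltW bmin0) bmin_le_bmax Imax0 Imax1 I_bound gbar_bound
  acS acl1 acl2 dl1 dl2 c cI l1c l2c.
by rewrite l2tbar => /eqP; rewrite oner_eq0.
Qed.
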